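(* Let $n\ge3$, $k\ge0$ with $n\le k$. Let $S\subseteq\mathrm{Inc}(A,B)$ be an independent, non-reversible set in $G_n^k$ which contains a strict alternating cycle $\{(x_\alpha,y_\alpha):\alpha\in[3]\}$ satisfying the Disjoint Property with $x_1=a_1$ and $y_3=b_{k+2}$. If $A(S)\subseteq\{a_1,\dots,a_{k+2}\}$ and $B(S)\subseteq\{b_1,\dots,b_{k+2}\}$, then $|S|\le (k+1)(k+2)/2+2-n$.
   Context: For integers $n\ge3$, $k\ge0$, the crown $S_n^k$ is the poset with ground set $A\cup B$, $A=\{a_1,\dots,a_{n+k}\}$, $B=\{b_1,\dots,b_{n+k}\}$, indices cyclic modulo $n+k$; elements of $A$ are pairwise incomparable, as are elements of $B$, and $a_i$ is incomparable to $b_j$ when $j\in\{i,\dots,i+k\}$ (mod $n+k$), while $a_i<b_j$ otherwise. $\mathrm{Inc}(A,B)$ is the set of pairs $(a,b)\in A\times B$ with $a$ incomparable to $b$; $G_n^k$ has vertex set $\mathrm{Inc}(A,B)$ with $(a,b)$ adjacent to $(x,y)$ iff $a<y$ and $x<b$. A set $R\subseteq\mathrm{Inc}(A,B)$ is reversible if some linear extension $L$ of $S_n^k$ has $b<a$ in $L$ for all $(a,b)\in R$. $A(S)=\{a:\exists b,(a,b)\in S\}$, $B(S)=\{b:\exists a,(a,b)\in S\}$. An indexed set $\{(x_\alpha,y_\alpha):\alpha\in[m]\}\subseteq\mathrm{Inc}(A,B)$ is an alternating cycle if $x_\alpha\le y_{\alpha-1}$ for all $\alpha$ (cyclic indices);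 strict if $x_\alpha\le y_\beta$ iff $\beta=\alpha-1$. Circle conventions: points $u_1,\dots,u_{n+k}$ lie clockwise on a circle, with $a_i$ and $b_i$ both at $u_i$; a chain $p_1\,R_1\,p_2\cdots p_\ell$ with $R_j\in\{\prec,\preceq\}$ means travelling clockwise from the position of $p_1$ until first reaching the position of $p_\ell$ one meets the positions of $p_2,\dots,p_{\ell-1}$ in order, $\prec$ requiring distinct consecutive positions and $\preceq$ allowing equality. A strict alternating cycle of size $3$ satisfies the Disjoint Property if $x_1\preceq y_1\prec x_2\preceq y_2\prec x_3\preceq y_3$. *)

From mathcomp Require Import all_boot.
Set Implicit Arguments. Unset Strict Implicit. Unset Printing Implicit Defensive.

(* Crown S_n^k with N = n + k.  a_i and b_i (paper indices 1..N) are
   represented 0-based by the ordinal i-1 : 'I_N.  Ground set: 'I_N + 'I_N,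
   inl i = a_(i+1), inr j = b_(j+1). *)

Definition cwd (N : nat) (p q : 'I_N) : nat := (q + N - p) %% N.

Definition incomp (N k : nat) (i j : 'I_N) : bool := cwd i j <= k.

Definition crown_elt (N : nat) := ('I_N + 'I_N)%type.

Definition crown_lt (N k : nat) (p q : crown_elt N) : bool :=
  match p, q with
  | inl i, inr j => ~~ incomp k i j
  | _, _ => false
  end.

Definition crown_le (N k : nat) (p q : crown_elt N) : bool :=
  (p == q) || crown_lt k p q.

Definition IncAB (N k : nat) : {set 'I_N * 'I_N} :=
  [set ab | incomp k ab.1 ab.2].

Definition is_linext (N k : nat) (L : rel (crown_elt N)) : Prop :=
  [/\ reflexive L, antisymmetric L, transitive L, total L &
      forall p q, crown_le k p q -> L p q].

(* R reversible: some linear extension has b < a for all (a,b) in R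
   (b <> a holds automatically since inr _ <> inl _) *)
Definition reversible (N k : nat) (R : {set 'I_N * 'I_N}) : Prop :=
  exists L : rel (crown_elt N), is_linext k L /\
    forall ab, ab \in R -> L (inr ab.2) (inl ab.1) && (inr ab.2 != inl ab.1 :> crown_elt N).

Definition Gadj (N k : nat) (u v : 'I_N * 'I_N) : bool :=
  crown_lt k (inl u.1) (inr v.2) && crown_lt k (inl v.1) (inr u.2).

Definition independent (N k : nat) (S : {set 'I_N * 'I_N}) : Prop :=
  S \subset IncAB N k /\ forall u v, u \in S -> v \in S -> ~~ Gadj k u v.

(* indexed set {(x_a, y_a) : a in [m]} (0-based indices), with
   beta = alpha - 1 cyclically  iff  (beta + 1) mod m = alpha *)
Definition alt_cycle (N k m : nat) (x y : 'I_m -> 'I_N) : Prop :=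
  (forall a, incomp k (x a) (y a)) /\
  forall a b : 'I_m, (b.+1 %% m == a) -> crown_le k (inl (x a)) (inr (y b)).

Definition strict_alt_cycle (N k m : nat) (x y : 'I_m -> 'I_N) : Prop :=
  alt_cycle k x y /\
  forall a b : 'I_m, crown_le k (inl (x a)) (inr (y b)) = (b.+1 %% m == a).

Definition i3_0 : 'I_3 := @Ordinal 3 0 isT.
Definition i3_1 : 'I_3 := @Ordinal 3 1 isT.
Definition i3_2 : 'I_3 := @Ordinal 3 2 isT.

(* Disjoint Property x1 <=. y1 <. x2 <=. y2 <. x3 <=. y3 : measuring
   clockwise distances from the position of x1, the positions are met in
   order on the clockwise arc from x1 to y3 ("<." = distinct positions). *)
Definition disjoint_property (N : nat) (x y : 'I_3 -> 'I_N) : Prop :=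
  let d q := cwd (x i3_0) q in
  [/\ d (y i3_0) < d (x i3_1), d (x i3_1) <= d (y i3_1),
      d (y i3_1) < d (x i3_2) & d (x i3_2) <= d (y i3_2)].

From mathcomp Require Import all_boot zify.

(* Number the positions of the window 1, ..., k+2 (0, ..., k+1 in the code)
   and send (a_i, b_j) in S to the two-element set {i, j+1}, with j+1 read
   cyclically (b_(k+2) goes to 1).  Within the window a_i < b_(i-1) (and
   a_1 < b_(k+2)), so two distinct pairs of S with the same image are the
   crossed pairs (a_i, b_j), (a_(j+1), b_(i-1)), which are adjacent in G_n^k:
   the map is injective.  It also misses the n-2 sets {1, m} with
   b+1 < m < b+n, where b_b is the last neighbour of a_1 in S before x_3.
   Independence of (a_1, b_b) and (x_3, b_(k+2)) puts x_3 at least n after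
   b_b; a preimage of {1, m} would be (a_1, b_(m-1)), contradicting the choice
   of b, or (a_m, b_(k+2)), adjacent to (a_1, b_b).  Hence
   |S| + n - 2 <= C(k+2, 2). *)

Set Implicit Arguments.
Unset Strict Implicit.
Unset Printing Implicit Defensive.

Lemma incompE (n k : nat) (i j : 'I_(n + k)) :
  incomp k i j = if i <= j then j - i <= k else n <= i - j.
Proof.
rewrite /incomp /cwd; have := ltn_ord i; have := ltn_ord j.
case: (leqP i j) => [le_ij|lt_ji] lt_jN lt_iN.
  by rewrite addnC -addnBA // modnDl modn_small; lia.
by rewrite modn_small; [apply/idP/idP; lia | lia].
Qed.

Lemma eq_set2 (T : finType) (a b c d : T) :
  [set a; b] = [set c; d] -> (a = c /\ b = d) \/ (a = d /\ b = c).
Proof.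
move=> E.
have ha : a \in [set c; d] by rewrite -E set21.
have hb : b \in [set c; d] by rewrite -E set22.
have hc : c \in [set a; b] by rewrite E set21.
have hd : d \in [set a; b] by rewrite E set22.
move: ha hb hc hd => /set2P[]-> /set2P[]-> /set2P[] hc /set2P[] hd; subst.
all: by [left | right].
Qed.

Lemma val_ordS_inord (c j : nat) : j < c.+1 ->
  ordS (inord j : 'I_c.+1) = (if j == c then 0 else j.+1) :> nat.
Proof.
move=> lt_jc; rewrite /= inordK //; case: eqP => [->|ne_jc]; first exact: modnn.
by rewrite modn_small // ltnS ltn_neqAle; apply/andP; split; [apply/eqP|].
Qed.

Lemma inord_small_inj (m c : nat) (i j : 'I_m) :
  i < c.+1 -> j < c.+1 -> inord i = inord j :> 'I_c.+1 -> i = j.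
Proof. by move=> lt_i lt_j /(congr1 (@nat_of_ord _)); rewrite !inordK // => /val_inj. Qed.

Section ShiftedPairs.

Variables n k : nat.
Hypothesis n_gt1 : 1 < n.
Local Notation N := (n + k).

Lemma incomp_ordS (i j : 'I_N) : i < k.+2 -> j < k.+2 ->
  incomp k i j -> inord i != ordS (inord j) :> 'I_k.+2.
Proof.
move=> lt_i lt_j; rewrite incompE; apply: contraTneq => /(congr1 (@nat_of_ord _)).
rewrite val_ordS_inord // inordK //; case: eqP => [-> ->|_ ->].
  by rewrite subn0 ltnn.
by rewrite ltnn subSnn -ltnNge.
Qed.

Variable S : {set 'I_N * 'I_N}.
Hypothesis S_indep : independent k S.
Hypothesis S_fst : forall p, p \in S -> p.1 < k.+2.
Hypothesis S_snd : forall p, p \in S -> p.2 < k.+2.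

Lemma S_incomp p : p \in S -> incomp k p.1 p.2.
Proof. by case: S_indep => /subsetP sub_SI _ /sub_SI; rewrite inE. Qed.

Lemma S_nonadj p q : p \in S -> q \in S -> incomp k p.1 q.2 || incomp k q.1 p.2.
Proof.
case: S_indep => _ nadj pS qS.
by move: (nadj p q pS qS); rewrite /Gadj /= negb_and !negbK.
Qed.

Definition shifted_pair (p : 'I_N * 'I_N) : {set 'I_k.+2} :=
  [set inord p.1; ordS (inord p.2)].

Lemma card_shifted_pair p : p \in S -> #|shifted_pair p| = 2.
Proof.
by move=> pS; rewrite cards2 incomp_ordS; [|exact: S_fst|exact: S_snd|exact: S_incomp].
Qed.

Lemma shifted_pair_inj : {in S &, injective shifted_pair}.
Proof.
move=> p q pS qS /eq_set2[[E1 /ordS_inj E2]|[E1 E2]].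
  apply: injective_projections.
    exact: inord_small_inj (S_fst pS) (S_fst qS) E1.
  exact: inord_small_inj (S_snd pS) (S_snd qS) E2.
have /negbTE nPQ : ~~ incomp k p.1 q.2.
  by apply: contraL (incomp_ordS (S_fst pS) (S_snd qS)) _; rewrite E1.
have /negbTE nQP : ~~ incomp k q.1 p.2.
  by apply: contraL (incomp_ordS (S_fst qS) (S_snd pS)) _; rewrite E2.
by move: (S_nonadj pS qS); rewrite nPQ nQP.
Qed.

Variables a0 b0 a1 b1 : 'I_N.
Hypotheses (a0_0 : a0 = 0 :> nat) (b1_last : b1 = k.+1 :> nat).
Hypotheses (a0b0_S : (a0, b0) \in S) (a1b1_S : (a1, b1) \in S) (lt_b0a1 : b0 < a1).

Definition last_nbr : 'I_N := [arg max_(b > b0 | ((a0, b) \in S) && (b < a1)) b].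

Lemma last_nbrP :
  [/\ (a0, last_nbr) \in S, last_nbr < a1 &
      forall b, (a0, b) \in S -> b < a1 -> b <= last_nbr].
Proof.
rewrite /last_nbr; case: arg_maxnP => [|b /andP[bS lt_ba1] max_b].
  by rewrite a0b0_S lt_b0a1.
by split=> // b' b'S lt_b'a1; apply: max_b; rewrite b'S.
Qed.

Lemma last_nbr_gap : last_nbr + n <= a1.
Proof.
case: last_nbrP => bS lt_ba1 _; move: (S_nonadj bS a1b1_S).
by rewrite /= !incompE a0_0 b1_last subn0 ltnn (leqNgt a1) lt_ba1 /=; lia.
Qed.

Lemma missed_lt (t : 'I_(n - 2)) : last_nbr + t.+2 < k.+2.
Proof. by have := last_nbr_gap; have /= := S_fst a1b1_S; have := ltn_ord t; lia. Qed.

Definition missed_pairs : {set {set 'I_k.+2}} :=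
  [set [set ord0; inord (last_nbr + t.+2)] | t : 'I_(n - 2)].

Lemma card_missed_pairs : #|missed_pairs| = n - 2.
Proof.
rewrite card_imset ?card_ord // => t u /eq_set2[[_ /(congr1 (@nat_of_ord _))]|[]].
  by rewrite !inordK ?missed_lt // => /eqP; rewrite eqn_add2l => /eqP [] /val_inj.
by move/(congr1 (@nat_of_ord _)); rewrite /= inordK ?missed_lt //; lia.
Qed.

Lemma shifted_pair_notin_missed p : p \in S -> shifted_pair p \notin missed_pairs.
Proof.
case: p => [i j] pS; have /= lt_i := S_fst pS; have /= lt_j := S_snd pS.
case: last_nbrP => bS lt_ba1 max_b; have gap := last_nbr_gap.
apply/imsetP => -[t _ /eq_set2[] [/(congr1 (@nat_of_ord _)) Ei]].
all: move=> /(congr1 (@nat_of_ord _)) Ej.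
  move: Ei Ej; rewrite val_ordS_inord // !inordK ?missed_lt //= => i0.
  have ia0 : i = a0 by apply: val_inj; rewrite /= i0 a0_0.
  subst i.
  by case: eqP => _ Ej; have /= := max_b j pS; have := ltn_ord t; lia.
move: Ei Ej; rewrite val_ordS_inord // !inordK ?missed_lt //; case: eqP => // jk Ei _.
move: (S_nonadj pS bS); rewrite /= !incompE a0_0 jk subn0 ltnn Ei orbF.
by have := ltn_ord t; case: ifP; lia.
Qed.

Lemma card_indep_bound : #|S| + (n - 2) <= 'C(k.+2, 2).
Proof.
have <- : #|[set A : {set 'I_k.+2} | #|A| == 2]| = 'C(k.+2, 2).
  by rewrite card_draws card_ord.
rewrite -(card_in_imset shifted_pair_inj) -card_missed_pairs -cardsUI.
have -> : shifted_pair @: S :&: missed_pairs = set0.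
  apply/setP => A; rewrite !inE; apply/andP => -[/imsetP[p pS ->]].
  exact/negP/shifted_pair_notin_missed.
rewrite cards0 addn0; apply/subset_leq_card/subsetP => A.
rewrite !inE => /orP[/imsetP[p pS ->]|/imsetP[t _ ->]]; first by rewrite card_shifted_pair.
rewrite cards2 (_ : ord0 != _) //; apply/eqP => /(congr1 (@nat_of_ord _)).
by rewrite inordK ?missed_lt //= addnS.
Qed.

End ShiftedPairs.

Lemma disjoint_property_lt (N : nat) (x y : 'I_3 -> 'I_N) :
  x i3_0 = 0 :> nat -> disjoint_property x y -> y i3_0 < x i3_2.
Proof.
rewrite /disjoint_property /cwd => ->; rewrite !subn0 !modnDr !modn_small ?ltn_ord //.
by case; lia.
Qed.

Theorem lemma6p7 (n k : nat) (S : {set 'I_(n + k) * 'I_(n + k)})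
    (x y : 'I_3 -> 'I_(n + k)) :
  3 <= n -> n <= k ->
  independent k S -> ~ reversible k S ->
  strict_alt_cycle k x y -> (forall a, (x a, y a) \in S) ->
  disjoint_property x y ->
  val (x i3_0) = 0 -> val (y i3_2) = k.+1 ->
  (forall ab, ab \in S -> ab.1 < k.+2) ->
  (forall ab, ab \in S -> ab.2 < k.+2) ->
  #|S| + n <= (k.+1 * k.+2) %/ 2 + 2.
Proof.
move=> n_ge3 _ S_indep _ _ xyS disj x0 y2 S_fst S_snd.
have := card_indep_bound (ltnW n_ge3) S_indep S_fst S_snd x0 y2 (xyS i3_0) (xyS i3_2)
  (disjoint_property_lt x0 disj).
by rewrite bin2 -divn2 mulnC; lia.
Qed.
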